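(* Let $k\ge1$ and $a_1,\dots,a_k\in\mathbb{F}_q$, and set $(b_1,\dots,b_k):=F(a_1,\dots,a_k)$. Then, as permutations of $\mathbb{P}^1(\mathbb{F}_q)$, $$x^{q-2}\circ(x-a_k)\circ x^{q-2}\circ(x-a_{k-1})\circ\cdots\circ x^{q-2}\circ(x-a_1)=\nu(x)\circ(b_1,\infty)\circ(b_2,\infty)\circ\cdots\circ(b_k,\infty),$$ where $\nu(x):=x^{-1}\circ(x-a_k)\circ x^{-1}\circ(x-a_{k-1})\circ\cdots\circ x^{-1}\circ(x-a_1)$, which is a degree-one rational function in $\mathbb{F}_q(x)$.
   Context: Let $q>2$ be a prime power, $\mathbb{F}_q$ the field with $q$ elements, $\mathbb{P}^1(\mathbb{F}_q)=\mathbb{F}_q\cup\{\infty\}$. Degree-one rational functions in $\mathbb{F}_q(x)$ act on $\mathbb{P}^1(\mathbb{F}_q)$ with the usual conventions (e.g. $x^{-1}$ swaps $0$ and $\infty$, polynomials fix $\infty$). $x^{q-2}$ acts on $\mathbb{P}^1(\mathbb{F}_q)$ by fixing $0$ and $\infty$ and sending $c\in\mathbb{F}_q^*$ to $c^{q-2}=c^{-1}$; for $c\in\mathbb{F}_q$, $c^{q-2}$ also denotes the field element ($0^{q-2}=0$). For $b\in\mathbb{F}_q$, $(b,\infty)$ is the transposition swapping $b$ and $\infty$. Composition is $(f\circ g)(x)=f(g(x))$. The map $F:\mathbb{F}_q^k\to\mathbb{F}_q^k$ sends $(a_1,\dots,a_k)$ to $(b_1,\dots,b_k)$ where $b_i:=c_{i,i}$,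 and for each $1\le i\le k$ the elements $c_{i,j}$ ($0\le j\le i$) are defined by $c_{i,0}:=0$ and $c_{i,j}:=c_{i,j-1}^{q-2}+a_{i-j+1}$. *)

(* P^1(F_q) is modelled as [option F]: [None] = infinity. *)
From mathcomp Require Import all_boot all_order all_algebra all_field.
Set Implicit Arguments. Unset Strict Implicit. Unset Printing Implicit Defensive.
Import GRing.Theory.
Local Open Scope ring_scope.

Section P1.
Variable F : finFieldType.

Definition P1 := option F.

Definition qF : nat := #|F|.

Definition powq2 (c : F) : F := c ^+ (qF - 2).

Definition act_powq2 (p : P1) : P1 :=
  match p with None => None | Some c => Some (powq2 c) end.

Definition act_sub (a : F) (p : P1) : P1 :=
  match p with None => None | Some c => Some (c - a) end.

Definition act_inv (p : P1) : P1 :=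
  match p with
  | None => Some 0
  | Some c => if c == 0 then None else Some c^-1
  end.

Definition transp_inf (b : F) (p : P1) : P1 :=
  match p with
  | None => Some b
  | Some c => if c == b then None else Some c
  end.

(* x^(q-2) o (x - a_k) o ... o x^(q-2) o (x - a_1), for a = [:: a_1; ...; a_k] *)
Definition lhs_map (a : seq F) : P1 -> P1 :=
  foldl (fun g ai => act_powq2 \o act_sub ai \o g) id a.

(* nu(x) = x^-1 o (x - a_k) o ... o x^-1 o (x - a_1) acting on P^1 *)
Definition nu_map (a : seq F) : P1 -> P1 :=
  foldl (fun g ai => act_inv \o act_sub ai \o g) id a.

(* (b_1, inf) o (b_2, inf) o ... o (b_k, inf) for b = [:: b_1; ...; b_k] *)
Definition transp_prod (b : seq F) : P1 -> P1 :=
  foldr (fun bi g => transp_inf bi \o g) id b.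

(* a_i (1-indexed) for a = [:: a_1; ...; a_k] *)
Definition aidx (a : seq F) (i : nat) : F := nth 0 a i.-1.

Fixpoint cij (a : seq F) (i j : nat) : F :=
  match j with
  | 0 => 0
  | j'.+1 => powq2 (cij a i j') + aidx a (i - j)%N.+1
  end.

Definition Fmap (a : seq F) : seq F := [seq cij a i i | i <- iota 1 (size a)].

End P1.

From mathcomp Require Import all_boot all_order all_algebra all_field.
From mathcomp Require Import zify.
Set Implicit Arguments. Unset Strict Implicit. Unset Printing Implicit Defensive.
Import GRing.Theory.
Local Open Scope ring_scope.

(* Proof of the factorisation
     x^(q-2) o (x - a_k) o ... o x^(q-2) o (x - a_1)
       = nu(x) o (b_1, oo) o ... o (b_k, oo)
   by induction on k, appending one parameter a_(k+1) = x at a time.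
   1. For q > 2, c^(q-2) = c^-1 on all of F (including c = 0), so x^(q-2)
      and x^-1 agree on P^1 except that x^-1 swaps 0 and oo.
   2. Writing h_s(x) := (...((x^-1 + a_k)^-1 + a_(k-1))^-1 ... )^-1 + a_1
      for s = (a_1, ..., a_k), the new coordinate of F is b_(k+1) = h_s(x),
      while b_1, ..., b_k are unchanged; moreover the left-hand map L_s
      sends h_s(x) to x (it undoes h_s layer by layer).
   3. Single-step lemma: for any permutation L of P^1 fixing oo with
      L(b) = a, one has x^(q-2) o (x - a) o L = x^-1 o (x - a) o L o (b, oo):
      the transposition exactly repairs the discrepancy of step 1.
   The theorem follows by applying 3 to L = L_s, b = h_s(a_(k+1)) and
   a = a_(k+1), then the induction hypothesis; the case k = 0 is trivial. *)

Lemma foldl_comp_id (A T : Type) (f : A -> T -> T) (s : seq A) (g : T -> T) :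
  foldl (fun h a => f a \o h) g s =1 foldl (fun h a => f a \o h) id s \o g.
Proof.
elim: s g => [|a s IH] g y //=.
by rewrite (IH (f a \o g)) (IH (f a \o id)).
Qed.

Lemma foldr_comp_id (A T : Type) (f : A -> T -> T) (s : seq A) (g : T -> T) :
  foldr (fun a h => f a \o h) g s =1 foldr (fun a h => f a \o h) id s \o g.
Proof. by elim: s => [|a s IH] y //=; rewrite IH. Qed.

Section Factorisation.
Variable F : finFieldType.

Definition hfun (s : seq F) (x : F) : F := foldr (fun a c => powq2 c + a) x s.

Lemma lhs_map_rcons (s : seq F) (x : F) :
  lhs_map (rcons s x) =1 @act_powq2 F \o act_sub x \o lhs_map s.
Proof. by move=> y; rewrite /lhs_map foldl_rcons. Qed.

Lemma lhs_map_cons (a : F) (s : seq F) :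
  lhs_map (a :: s) =1 lhs_map s \o (@act_powq2 F \o act_sub a).
Proof. by move=> y; rewrite /lhs_map /= foldl_comp_id. Qed.

Lemma nu_map_rcons (s : seq F) (x : F) :
  nu_map (rcons s x) =1 @act_inv F \o act_sub x \o nu_map s.
Proof. by move=> y; rewrite /nu_map foldl_rcons. Qed.

Lemma transp_prod_rcons (B : seq F) (b : F) :
  transp_prod (rcons B b) =1 transp_prod B \o transp_inf b.
Proof. by move=> y; rewrite /transp_prod foldr_rcons foldr_comp_id. Qed.

Lemma lhs_map_None (s : seq F) : lhs_map s None = None.
Proof. by elim/last_ind: s => // s x IH; rewrite lhs_map_rcons /= IH. Qed.

(* For j < i, c_{i,j} only involves a_2, ..., a_i: dropping a_1 shifts i. *)
Lemma cij_cons (a : F) (s : seq F) i j : (j < i)%N -> cij (a :: s) i j = cij s i.-1 j.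
Proof.
case: i => // i; elim: j => [|j IH] lt_ji //=.
by rewrite IH ?(ltnW lt_ji) // /aidx /= subSS -subnSK.
Qed.

Lemma cij_rcons (s : seq F) (x : F) i j : (j <= i)%N -> (i <= size s)%N ->
  cij (rcons s x) i j = cij s i j.
Proof.
move=> + le_is; elim: j => [|j IH] le_ji //=.
by rewrite IH ?(ltnW le_ji) // /aidx /= nth_rcons ifT //; lia.
Qed.

Section LargeField.
Hypothesis q_gt2 : (2 < #|F|)%N.

Lemma powq2E (c : F) : powq2 c = c^-1.
Proof.
rewrite /powq2 /qF; have [->|c_nz] := eqVneq c 0.
  by rewrite invr0 expr0n; case: eqP => //; lia.
apply: (mulIf c_nz); rewrite mulVf // -exprSr.
have -> : (#|F| - 2).+1 = #|F|.-1 by lia.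
by apply: (mulIf c_nz); rewrite mul1r -exprSr prednK ?expf_card //; lia.
Qed.

Lemma inj_powq2_sub (a : F) : injective (@act_powq2 F \o act_sub a).
Proof. by move=> [u|] [v|] //= []; rewrite !powq2E => /invr_inj /subIr ->. Qed.

Lemma lhs_map_inj (s : seq F) : injective (lhs_map s).
Proof.
elim/last_ind: s => [|s x IH] y z //.
by rewrite !lhs_map_rcons /= => /inj_powq2_sub /IH.
Qed.

Lemma lhs_map_hfun (s : seq F) (x : F) : lhs_map s (Some (hfun s x)) = Some x.
Proof. by elim: s => [|a s IH] //=; rewrite lhs_map_cons /= addrK !powq2E invrK. Qed.

Lemma step_transp (L : P1 F -> P1 F) (b a : F) :
  injective L -> L None = None -> L (Some b) = Some a ->
  @act_powq2 F \o act_sub a \o L =1 @act_inv F \o act_sub a \o L \o transp_inf b.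
Proof.
move=> L_inj L_oo L_b [c|]; last by rewrite /= L_b L_oo /= subrr eqxx.
have [->|c_ne_b] := eqVneq c b; first by rewrite /= eqxx L_b L_oo /= subrr powq2E invr0.
rewrite /= (negbTE c_ne_b).
case Lc: (L (Some c)) => [d|]; last by rewrite -L_oo in Lc; move/L_inj: Lc.
have d_ne_a : d != a.
  by apply: contra c_ne_b => /eqP da; rewrite -da -Lc in L_b; move/L_inj: L_b => [->].
by rewrite /= subr_eq0 (negbTE d_ne_a) powq2E.
Qed.

Lemma cij_rcons_last (s : seq F) (x : F) :
  cij (rcons s x) (size s).+1 (size s).+1 = hfun s x.
Proof.
elim: s => [|a s IH]; first by rewrite /= powq2E invr0 add0r.
have cij_diag t i : cij t i.+1 i.+1 = powq2 (cij t i.+1 i) + aidx t 1.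
  by rewrite /= subnn.
by rewrite rcons_cons cij_diag cij_cons // [_.-1]/= IH.
Qed.

Lemma Fmap_rcons (s : seq F) (x : F) : Fmap (rcons s x) = rcons (Fmap s) (hfun s x).
Proof.
rewrite /Fmap size_rcons -[(size s).+1]addn1 iotaD map_cat -[RHS]cats1.
congr (_ ++ _); last by rewrite add1n -cij_rcons_last.
apply/eq_in_map => i; rewrite mem_iota => /andP [i_ge1 i_le].
by apply: cij_rcons => //; lia.
Qed.

End LargeField.

End Factorisation.

Theorem theorem3p2 (F : finFieldType) (a : seq F) :
  (2 < #|F|)%N -> (1 <= size a)%N ->
  lhs_map a =1 nu_map a \o transp_prod (Fmap a).
Proof.
move=> q_gt2 _; elim/last_ind: a => [|s x IH] y //.
have := step_transp q_gt2 (@lhs_map_inj _ q_gt2 s) (lhs_map_None s)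
          (lhs_map_hfun q_gt2 s x) y.
rewrite /= lhs_map_rcons nu_map_rcons (Fmap_rcons q_gt2) transp_prod_rcons /= => ->.
by rewrite IH.
Qed.
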